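(* Let $e\ge1$ and let $x_0$ be any vertex of $X_{PGL_2(F)}$. The stabiliser $\hat K_{x_0}=\{g\in\hat G^{(e)}: g(x_0)=x_0\}$ acts transitively on the set of ends of $X_{PGL_2(F)}$.
   Context: Let $F$ be a non-archimedean local field with ring of integers $\mathfrak{o}$, uniformizer $\varpi$, and finite residue field of cardinality $q$. $X=X_{PGL_2(F)}$ is the Bruhat–Tits tree of $PGL_2(F)$: its vertices are homothety classes $[L]$ (under $F^\times$) of $\mathfrak{o}$-lattices $L\subset F^2$, and $[L],[L']$ are joined by an edge iff there are representatives with $\varpi L\subsetneq L'\subsetneq L$; it is a $(q+1)$-regular tree. $d$ is the path-length distance on vertices; $\mathrm{Aut}(X)$ is the group of distance-preserving bijections of the vertex set, with the topology of pointwise convergence. $GL_2(F)$ acts on lattices through its linear action on $F^2$, the centre acts trivially, and this gives an embedding $PGL_2(F)\hookrightarrow\mathrm{Aut}(X)$. For an edge $\eta=\{x_1,x_2\}$ and $e\ge1$, $B(\eta,e)=\{y: \min(d(y,x_1),d(y,x_2))\le e\}$. Define $\hat G^{(e)}=\{g\in\mathrm{Aut}(X):\ \text{for every edge }\eta\ \text{there is } g'\in PGL_2(F)\text{ with } g|_{B(\eta,e)}=g'|_{B(\eta,e)}\}$. An end is an equivalence class of infinite paths $(y_i)_{i\in\mathbb{N}}$ (distinct vertices, consecutive ones adjacent), two paths being equivalent if they agree after a shift of index from some point on; automorphisms act on ends. *)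

From HB Require Import structures.
From mathcomp Require Import all_boot all_order all_algebra.
Set Implicit Arguments. Unset Strict Implicit. Unset Printing Implicit Defensive.
Import Order.TTheory GRing.Theory Num.Theory.
Local Open Scope ring_scope.

Section BTTree.
Variable F : fieldType.
(* normalized discrete valuation; its value at 0 is irrelevant (never used) *)
Variable v : F -> int.

Definition in_o (x : F) : Prop := x = 0 \/ 0 <= v x.

Definition is_discrete_valuation : Prop :=
  [/\ (forall x y, x != 0 -> y != 0 -> v (x * y) = v x + v y),
      (forall x y, x != 0 -> y != 0 -> x + y != 0 ->
          Num.min (v x) (v y) <= v (x + y)) &
      (exists p : F, p != 0 /\ v p = 1)].

Definition finite_residue_field : Prop :=
  exists s : seq F, (forall r, r \in s -> in_o r) /\
    forall x, in_o x -> exists2 r, r \in s & (x - r = 0 \/ 1 <= v (x - r)).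

Definition complete_valuation : Prop :=
  forall a : nat -> F,
    (forall N : nat, exists M : nat, forall m n, (M <= m)%N -> (M <= n)%N ->
        a m - a n = 0 \/ (N%:Z <= v (a m - a n))) ->
    exists l : F, forall N : nat, exists M : nat, forall n, (M <= n)%N ->
        a n - l = 0 \/ (N%:Z <= v (a n - l)).

Definition is_nonarch_local_field : Prop :=
  [/\ is_discrete_valuation, finite_residue_field & complete_valuation].

Definition vec := 'cV[F]_2.

Definition is_lattice (L : vec -> Prop) : Prop :=
  exists B : 'M[F]_2, B \in unitmx /\
    forall w, L w <-> exists c : vec, (forall i, in_o (c i 0)) /\ w = B *m c.

Definition scale_lat (c : F) (L : vec -> Prop) : vec -> Prop :=
  fun w => exists w0, L w0 /\ w = c *: w0.

Definition homothetic (L L' : vec -> Prop) : Prop :=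
  exists c : F, c != 0 /\ forall w, L' w <-> scale_lat c L w.

Definition is_vertex (C : (vec -> Prop) -> Prop) : Prop :=
  exists L, is_lattice L /\ forall L', C L' <-> homothetic L L'.

Definition vertex := {C : (vec -> Prop) -> Prop | is_vertex C}.

Definition strict_sub (A B : vec -> Prop) : Prop :=
  (forall w, A w -> B w) /\ exists w, B w /\ ~ A w.

(* adjacency, for a uniformizer p *)
Definition adj (p : F) (x y : vertex) : Prop :=
  exists L L', proj1_sig x L /\ proj1_sig y L' /\
    strict_sub (scale_lat p L) L' /\ strict_sub L' L.

Fixpoint walk (p : F) (x y : vertex) (n : nat) : Prop :=
  match n with
  | 0 => x = y
  | n'.+1 => exists z, adj p x z /\ walk p z y n'
  end.

Definition dist (p : F) (x y : vertex) (n : nat) : Prop :=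
  walk p x y n /\ forall m, (m < n)%N -> ~ walk p x y m.

Definition is_aut (p : F) (g : vertex -> vertex) : Prop :=
  bijective g /\ forall x y n, dist p x y n <-> dist p (g x) (g y) n.

Definition in_ball (p : F) (x1 x2 : vertex) (e : nat) (y : vertex) : Prop :=
  exists n, (n <= e)%N /\ (dist p y x1 n \/ dist p y x2 n).

Definition mat_moves (M : 'M[F]_2) (y z : vertex) : Prop :=
  forall L', proj1_sig z L' <->
    exists L, proj1_sig y L /\ forall w, L' w <-> exists w0, L w0 /\ w = M *m w0.

Definition in_Ghat (p : F) (e : nat) (g : vertex -> vertex) : Prop :=
  is_aut p g /\
  forall x1 x2, adj p x1 x2 ->
    exists M : 'M[F]_2, M \in unitmx /\
      forall y, in_ball p x1 x2 e y -> mat_moves M y (g y).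

Definition ray (p : F) (r : nat -> vertex) : Prop :=
  injective r /\ forall i, adj p (r i) (r i.+1).

Definition equiv_rays (r1 r2 : nat -> vertex) : Prop :=
  exists a b : nat, forall i, r1 (a + i)%N = r2 (b + i)%N.

End BTTree.

(* Already the stabiliser of [x0] in PGL_2(F), which lies in every
   \hat G^(e), is transitive; conjugating by a matrix carrying the standard
   vertex [[o^2]] to [x0] we may take [x0 = [o^2]].  For a primitive vector [a]
   of [o^2] the lattices [towards a n = o a + p^n o^2] trace the ray from
   [[o^2]] to the end given by the line [F a].  Every vertex is of the form
   [[towards a n]] (normal form), and the neighbours of [[towards a n]] are the
   [[towards w (n+1)]] with [w = a mod p^n] and, when [n > 0], [[towards a (n-1)]].
   Along a ray, representations chosen step by step eventually only step
   outwards, so their vectors form a Cauchy sequence; by completeness of [F]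
   they converge to a primitive [u] with a tail of the ray equal to
   [[towards u (N0 + k)]].  Finally the stabiliser of [o^2] maps any primitive
   [u1] to any primitive [u2], hence [towards u1 n] to [towards u2 n]. *)

From Stdlib Require Import FunctionalExtensionality PropExtensionality ProofIrrelevance.
From Stdlib Require Import Classical ClassicalEpsilon Arith.Wf_nat.
From HB Require Import structures.
From mathcomp Require Import all_boot all_order all_algebra.
From mathcomp Require Import zify ring.
Import Order.TTheory GRing.Theory Num.Theory.
Local Open Scope ring_scope.
Set Implicit Arguments. Unset Strict Implicit.

Lemma predE (T : Type) (A B : T -> Prop) : (forall w, A w <-> B w) -> A = B.
Proof.
by move=> h; apply: functional_extensionality => w; apply: propositional_extensionality.
Qed.

Lemma ex_least (P : nat -> Prop) :
  (exists n, P n) -> exists n, P n /\ forall k, P k -> (n <= k)%N.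
Proof.
move=> hP; have dec : forall n, P n \/ ~ P n by move=> n; exact: classic.
have [n [[Pn nmin] _]] := @dec_inh_nat_subset_has_unique_least_element P dec hP.
by exists n; split => // k /nmin /ssrnat.leP.
Qed.

Lemma seq_argmin (T : eqType) (P : pred T) (f : T -> int) (s : seq T) :
  has P s -> exists2 m, m \in s & P m /\ forall y, y \in s -> P y -> f m <= f y.
Proof.
elim: s => [//|x s IH] /=; case: (boolP (P x)) => [Px _|nPx /= /IH [m ms [Pm mmin]]].
  case: (boolP (has P s)) => [/IH [m ms [Pm mmin]]|/hasPn nP].
    case: (lerP (f x) (f m)) => hxm.
      exists x; first exact: mem_head.
      split=> // y; rewrite inE => /orP [/eqP ->|ys] Py //.
      exact: le_trans hxm (mmin y ys Py).
    exists m; first by rewrite inE ms orbT.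
    split=> // y; rewrite inE => /orP [/eqP ->|ys] Py; [exact: ltW|exact: mmin].
  exists x; first exact: mem_head.
  split=> // y; rewrite inE => /orP [/eqP ->|/nP]; [by []|by move/negP].
exists m; first by rewrite inE ms orbT.
split=> // y; rewrite inE => /orP [/eqP ->|ys] Py; [by rewrite Py in nPx|exact: mmin].
Qed.

Section BruhatTitsTree.

Variable F : fieldType.
Variable v : F -> int.
Variable p : F.
Hypothesis v_mul : forall x y : F, x != 0 -> y != 0 -> v (x * y) = v x + v y.
Hypothesis v_add : forall x y : F, x != 0 -> y != 0 -> x + y != 0 ->
  Num.min (v x) (v y) <= v (x + y).
Hypothesis p_neq0 : p != 0.
Hypothesis v_p : v p = 1.

Lemma v1 : v 1 = 0.
Proof.
have := v_mul (oner_neq0 F) (oner_neq0 F); rewrite mulr1 => h.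
by apply: (@addrI _ (v 1)); rewrite addr0 -h.
Qed.

Lemma vN x : v (- x) = v x.
Proof.
have [->|x0] := eqVneq x 0; first by rewrite oppr0.
have m1 : (-1 : F) != 0 by rewrite oppr_eq0 oner_neq0.
have vm1 : v (-1) = 0 by have := v_mul m1 m1; rewrite mulrNN mulr1 v1; lia.
by rewrite -mulN1r v_mul // vm1 add0r.
Qed.

Lemma vV x : x != 0 -> v x^-1 = - v x.
Proof.
move=> x0; have := v_mul x0 (invr_neq0 x0); rewrite mulfV // v1; lia.
Qed.

Lemma pX_neq0 n : p ^+ n != 0.
Proof. exact: expf_neq0. Qed.

Lemma v_pX n : v (p ^+ n) = n%:Z.
Proof.
elim: n => [|n IH]; first by rewrite expr0 v1.
by rewrite exprS v_mul ?pX_neq0 // IH v_p; lia.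
Qed.

Definition divp (n : nat) (x : F) := x = 0 \/ n%:Z <= v x.

Definition unit_o (x : F) := x != 0 /\ v x = 0.

Lemma divp0 n : divp n 0.
Proof. by left. Qed.

Lemma divp_le m n x : (m <= n)%N -> divp n x -> divp m x.
Proof. by move=> hmn [->|h]; [left|right; lia]. Qed.

Lemma divpD n x y : divp n x -> divp n y -> divp n (x + y).
Proof.
have [->|x0] := eqVneq x 0; first by rewrite add0r.
have [->|y0] := eqVneq y 0; first by rewrite addr0.
have [->|s0] := eqVneq (x + y) 0; first by left.
move=> [/eqP|hx]; first by rewrite (negPf x0).
move=> [/eqP|hy]; first by rewrite (negPf y0).
by right; have := v_add x0 y0 s0; rewrite ge_min => /orP [] h; lia.
Qed.

Lemma divpN n x : divp n x -> divp n (- x).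
Proof. by move=> [->|h]; [rewrite oppr0; left|right; rewrite vN]. Qed.

Lemma divpB n x y : divp n x -> divp n y -> divp n (x - y).
Proof. by move=> hx /divpN; apply: divpD. Qed.

Lemma divpM m n x y : divp m x -> divp n y -> divp (m + n) (x * y).
Proof.
have [->|x0] := eqVneq x 0; first by rewrite mul0r; left.
have [->|y0] := eqVneq y 0; first by rewrite mulr0; left.
move=> [/eqP|hx]; first by rewrite (negPf x0).
move=> [/eqP|hy]; first by rewrite (negPf y0).
by right; rewrite v_mul //; lia.
Qed.

Lemma divp_pX n : divp n (p ^+ n).
Proof. by right; rewrite v_pX. Qed.

Lemma divp_in_o n x : divp n x -> in_o v x.
Proof. exact: divp_le. Qed.

Lemma divpP n x : divp n x <-> exists2 y, in_o v y & x = p ^+ n * y.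
Proof.
split; last by move=> [y hy ->]; have := divpM (divp_pX n) hy; rewrite addn0.
have [->|x0] := eqVneq x 0; first by exists 0; [left|rewrite mulr0].
move=> [/eqP|h]; first by rewrite (negPf x0).
exists (x / p ^+ n); last by rewrite mulrC divfK ?pX_neq0.
by right; rewrite v_mul ?invr_eq0 ?pX_neq0 // vV ?pX_neq0 // v_pX; lia.
Qed.

Lemma in_o0 : in_o v 0. Proof. exact: divp0. Qed.
Lemma in_o1 : in_o v 1. Proof. by right; rewrite v1. Qed.
Lemma in_o_pX n : in_o v (p ^+ n). Proof. exact: divp_in_o (divp_pX n). Qed.
Lemma in_oD x y : in_o v x -> in_o v y -> in_o v (x + y). Proof. exact: divpD. Qed.
Lemma in_oN x : in_o v x -> in_o v (- x). Proof. exact: divpN. Qed.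
Lemma in_oB x y : in_o v x -> in_o v y -> in_o v (x - y). Proof. exact: divpB. Qed.
Lemma in_oM x y : in_o v x -> in_o v y -> in_o v (x * y). Proof. exact: (divpM (n := 0)). Qed.

Lemma unit_o_neq0 x : unit_o x -> x != 0. Proof. by case. Qed.
Lemma unit_o_in_o x : unit_o x -> in_o v x. Proof. by move=> [_ h]; right; rewrite h. Qed.

Lemma unit_oV x : unit_o x -> unit_o x^-1.
Proof. by move=> [x0 h]; split; [rewrite invr_eq0|rewrite vV // h]. Qed.

Lemma unit_oM x y : unit_o x -> unit_o y -> unit_o (x * y).
Proof. by move=> [x0 hx] [y0 hy]; split; [rewrite mulf_neq0|rewrite v_mul // hx hy]. Qed.

Lemma unit_oN x : unit_o x -> unit_o (- x).
Proof. by move=> [x0 h]; split; [rewrite oppr_eq0|rewrite vN]. Qed.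

Lemma in_oV x : unit_o x -> in_o v x^-1.
Proof. by move/unit_oV/unit_o_in_o. Qed.

Lemma in_o_div x y : in_o v x -> unit_o y -> in_o v (x / y).
Proof. by move=> hx /in_oV; apply: in_oM. Qed.

Lemma unit_o_div x y : x != 0 -> y != 0 -> v x = v y -> unit_o (x / y).
Proof.
move=> x0 y0 e; split; first by rewrite mulf_neq0 ?invr_eq0.
by rewrite v_mul ?invr_eq0 // vV // e; lia.
Qed.

Lemma unit_or_divp1 x : in_o v x -> unit_o x \/ divp 1 x.
Proof.
have [->|x0] := eqVneq x 0; first by right; left.
move=> [/eqP|h]; first by rewrite (negPf x0).
by have [e|ne] := eqVneq (v x) 0; [left|right; right; lia].
Qed.

Lemma unit_not_divp1 x : unit_o x -> ~ divp 1 x.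
Proof. by move=> [x0 h] [e|e]; [move: x0; rewrite e eqxx|lia]. Qed.

Lemma unit_oD_divp1 x y : unit_o x -> divp 1 y -> unit_o (x + y).
Proof.
have [->|y0] := eqVneq y 0; first by rewrite addr0.
move=> [x0 vx] [/eqP|vy]; first by rewrite (negPf y0).
have s0 : x + y != 0.
  by apply: contraTneq vy => /eqP; rewrite addrC addr_eq0 => /eqP ->; rewrite vN vx.
split => //; have xs : (x + y) + (- y) != 0 by rewrite addrK.
have ny0 : - y != 0 by rewrite oppr_eq0.
have := v_add s0 ny0 xs; have := v_add x0 y0 s0.
by rewrite addrK vN !ge_min => /orP [] h /orP [] h'; lia.
Qed.

Lemma divp1P x : divp 1 x <-> exists2 y, in_o v y & x = p * y.
Proof. by rewrite divpP expr1. Qed.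

Lemma scale_into_o y : exists k, in_o v (p ^+ k * y).
Proof.
have [->|y0] := eqVneq y 0; first by exists 0%N; rewrite mulr0; left.
by exists (absz (v y)); right; rewrite v_mul ?pX_neq0 // v_pX; lia.
Qed.

Local Notation V := 'cV[F]_2.

Lemma vec2P (a b : V) : a 0 0 = b 0 0 -> a 1 0 = b 1 0 -> a = b.
Proof.
move=> h0 h1; apply/matrixP => i j; rewrite (ord1 j).
by case: i => [[|[|//]]] Hi; [rewrite (_ : Ordinal Hi = 0) | rewrite (_ : Ordinal Hi = 1)];
  try apply/val_inj.
Qed.

Definition mkv (x y : F) : V := \col_i (if i == 0 then x else y).
Lemma mkv0 x y : mkv x y 0 0 = x. Proof. by rewrite mxE. Qed.
Lemma mkv1 x y : mkv x y 1 0 = y. Proof. by rewrite mxE. Qed.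

Definition integral (z : V) := in_o v (z 0 0) /\ in_o v (z 1 0).
Definition divpv n (z : V) := divp n (z 0 0) /\ divp n (z 1 0).

(* [a] is primitive: integral with a unit coordinate, i.e. [a] spans a
   direct summand of [o^2]. *)
Definition primitive (a : V) := integral a /\ (unit_o (a 0 0) \/ unit_o (a 1 0)).

Definition det2 (a b : V) := a 0 0 * b 1 0 - a 1 0 * b 0 0.

Definition span2 (x y : V) : V -> Prop :=
  fun w => exists al be, [/\ in_o v al, in_o v be & w = al *: x + be *: y].

Lemma divpv_integral n z : divpv n z -> integral z.
Proof. by case=> h0 h1; split; apply: divp_in_o; eauto. Qed.

Lemma divpvD n x y : divpv n x -> divpv n y -> divpv n (x + y).
Proof. by case=> ? ? [? ?]; split; rewrite mxE; apply: divpD. Qed.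

Lemma divpvN n x : divpv n x -> divpv n (- x).
Proof. by case=> ? ?; split; rewrite mxE; apply: divpN. Qed.

Lemma divpv_le m n x : (m <= n)%N -> divpv n x -> divpv m x.
Proof. by move=> h [? ?]; split; apply: divp_le h _. Qed.

Lemma divpvZ m n c x : divp m c -> divpv n x -> divpv (m + n) (c *: x).
Proof. by move=> hc [? ?]; split; rewrite mxE; apply: divpM. Qed.

Lemma integralD x y : integral x -> integral y -> integral (x + y).
Proof. exact: (@divpvD 0). Qed.

Lemma integralZ c x : in_o v c -> integral x -> integral (c *: x).
Proof. exact: (@divpvZ 0 0). Qed.

Lemma divpvP n z : divpv n z <-> exists2 y, integral y & z = p ^+ n *: y.
Proof.
split; last by move=> [y hy ->]; have := divpvZ (divp_pX n) hy; rewrite addn0.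
case=> /divpP [a ha ea] /divpP [b hb eb].
by exists (mkv a b); [rewrite /integral mkv0 mkv1|apply: vec2P; rewrite !mxE].
Qed.

Lemma span2_x x y : span2 x y x.
Proof. by exists 1, 0; rewrite scale1r scale0r addr0; split; [exact: in_o1|exact: in_o0|]. Qed.

Lemma span2_y x y : span2 x y y.
Proof. by exists 0, 1; rewrite scale1r scale0r add0r; split; [exact: in_o0|exact: in_o1|]. Qed.

Lemma span2_comb x y c d a b : in_o v c -> in_o v d -> span2 x y a -> span2 x y b ->
  span2 x y (c *: a + d *: b).
Proof.
move=> hc hd [a1 [a2 [h1 h2 ->]]] [b1 [b2 [k1 k2 ->]]].
exists (c * a1 + d * b1), (c * a2 + d * b2).
split; try by apply: in_oD; apply: in_oM.
by apply: vec2P; rewrite !mxE; ring.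
Qed.

Lemma span2Z x y c a : in_o v c -> span2 x y a -> span2 x y (c *: a).
Proof. by move=> hc ha; have := span2_comb hc in_o0 ha ha; rewrite scale0r addr0. Qed.

Lemma integral_span x y z : integral x -> integral y -> span2 x y z -> integral z.
Proof. by move=> hx hy [a [b [ha hb ->]]]; apply: integralD; apply: integralZ. Qed.

Lemma cramer x y z : det2 x y != 0 ->
  z = (det2 z y / det2 x y) *: x + (det2 x z / det2 x y) *: y.
Proof. by rewrite /det2 => hd; apply: vec2P; rewrite !mxE; field. Qed.

Lemma integral_det2 x y : integral x -> integral y -> in_o v (det2 x y).
Proof. by move=> [? ?] [? ?]; apply: in_oB; apply: in_oM. Qed.

Lemma span2_basis a f : integral a -> integral f -> unit_o (det2 a f) ->
  span2 a f = integral.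
Proof.
move=> ha hf hd; apply: predE => z; split; first exact: integral_span.
move=> hz; exists (det2 z f / det2 a f), (det2 a z / det2 a f).
by split; [apply: in_o_div|apply: in_o_div|apply: cramer; apply: unit_o_neq0];
  rewrite //; apply: integral_det2.
Qed.

Lemma primitive_det x f : integral x -> integral f -> unit_o (det2 x f) -> primitive x.
Proof.
move=> hx [k0 k1] hd; split => //; case: hx => h0 h1.
case: (unit_or_divp1 h0) => [u|d0]; first by left.
case: (unit_or_divp1 h1) => [u|d1]; first by right.
exfalso; apply: (unit_not_divp1 hd).
by apply: divpB; [exact: (divpM d0 k1)|exact: (divpM d1 k0)].
Qed.

Lemma primitive_completion a : primitive a -> exists2 f, integral f & unit_o (det2 a f).
Proof.
move=> [ha [u|u]].
  exists (mkv 0 1); first by rewrite /integral mkv0 mkv1; split; [exact: in_o0|exact: in_o1].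
  by rewrite /det2 mkv0 mkv1 mulr1 mulr0 subr0.
exists (mkv 1 0); first by rewrite /integral mkv0 mkv1; split; [exact: in_o1|exact: in_o0].
by rewrite /det2 mkv0 mkv1 mulr0 mulr1 sub0r; apply: unit_oN.
Qed.

Lemma primitive_mod a u : primitive a -> divpv 1 (u - a) -> primitive u.
Proof.
move=> [ha hu] hd; have -> : u = a + (u - a) by rewrite addrC subrK.
split; first by apply: integralD => //; apply: divpv_integral hd.
by case: hd; case: hu => hu d0 d1; [left|right]; rewrite mxE; apply: unit_oD_divp1.
Qed.

Lemma det22 (B : 'M[F]_2) : \det B = B 0 0 * B 1 1 - B 0 1 * B 1 0.
Proof.
have lift01 (i : 'I_2) (j : 'I_1) : lift i j = if val i == 0%N then 1 else 0.
  by apply/val_inj; rewrite (ord1 j) /= /bump; case: i => [[|[|//]]].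
rewrite (expand_det_row _ 0) !big_ord_recl big_ord0 addr0 /cofactor !det_mx11 /=.
by rewrite !mxE /= !lift01 /= expr0 expr1 mul1r mulN1r mulrN.
Qed.

Lemma mulmx_cols (B : 'M[F]_2) (c : V) : B *m c = c 0 0 *: col 0 B + c 1 0 *: col 1 B.
Proof.
have l01 : lift ord0 (ord0 : 'I_1) = 1 :> 'I_2 by apply/val_inj.
by apply: vec2P; rewrite !mxE !big_ord_recl big_ord0 addr0 l01 !(mulrC (c _ _)).
Qed.

Definition lat (B : 'M[F]_2) : V -> Prop :=
  fun w => exists c : V, (forall i, in_o v (c i 0)) /\ w = B *m c.

Lemma integral_all (c : V) : (forall i, in_o v (c i 0)) <-> integral c.
Proof.
split=> [h|[h0 h1] i]; first by split; apply: h.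
by case: i => [[|[|//]]] Hi; [rewrite (_ : Ordinal Hi = 0)|rewrite (_ : Ordinal Hi = 1)];
  try apply/val_inj.
Qed.

Lemma lat_span B : lat B = span2 (col 0 B) (col 1 B).
Proof.
apply: predE => w; split.
  by move=> [c [/integral_all [h0 h1] ->]]; exists (c 0 0), (c 1 0); rewrite mulmx_cols.
move=> [a [b [ha hb ->]]]; exists (mkv a b).
by rewrite integral_all /integral mulmx_cols !mkv0 !mkv1.
Qed.

Lemma lat1 : lat 1%:M = integral.
Proof.
apply: predE => w; split; first by move=> [c [/integral_all h ->]]; rewrite mul1mx.
by move=> h; exists w; rewrite integral_all mul1mx.
Qed.

Definition mat2 (x y : V) : 'M[F]_2 := \matrix_(i, j) (if j == 0 then x i 0 else y i 0).

Lemma mat2_e1 x y : mat2 x y *m mkv 1 0 = x.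
Proof. by rewrite mulmx_cols mkv0 mkv1 scale1r scale0r addr0; apply: vec2P; rewrite !mxE. Qed.

Lemma mat2_e2 x y : mat2 x y *m mkv 0 1 = y.
Proof. by rewrite mulmx_cols mkv0 mkv1 scale1r scale0r add0r; apply: vec2P; rewrite !mxE. Qed.

Lemma unitmx_mat2 x y : (mat2 x y \in unitmx) = (det2 x y != 0).
Proof. by rewrite unitmxE unitfE det22 !mxE /det2 /= [y 0 0 * _]mulrC. Qed.

Lemma latticeB L : is_lattice v L <-> exists2 B, B \in unitmx & L = lat B.
Proof.
split; first by move=> [B [hB h]]; exists B => //; apply: predE.
by move=> [B hB ->]; exists B.
Qed.

Lemma latticeP L : is_lattice v L <-> exists x y, det2 x y != 0 /\ L = span2 x y.
Proof.
rewrite latticeB; split.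
  move=> [B hB ->]; exists (col 0 B), (col 1 B); rewrite lat_span; split => //.
  by move: hB; rewrite unitmxE unitfE det22 /det2 !mxE [B 0 1 * _]mulrC.
move=> [x [y [hd ->]]]; exists (mat2 x y); first by rewrite unitmx_mat2.
by rewrite lat_span; congr span2; apply: vec2P; rewrite !mxE.
Qed.

Lemma scale1 (L : V -> Prop) : scale_lat 1 L = L.
Proof.
apply: predE => w; split; first by move=> [w0 [h ->]]; rewrite scale1r.
by move=> h; exists w; rewrite scale1r.
Qed.

Lemma scaleM a b (L : V -> Prop) : scale_lat a (scale_lat b L) = scale_lat (a * b) L.
Proof.
apply: predE => w; split; first by move=> [w0 [[w1 [h ->]] ->]]; exists w1; rewrite scalerA.
by move=> [w1 [h ->]]; exists (b *: w1); split; [exists w1|rewrite scalerA].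
Qed.

Lemma scaleK c (L : V -> Prop) : c != 0 -> scale_lat c^-1 (scale_lat c L) = L.
Proof. by move=> c0; rewrite scaleM mulVf // scale1. Qed.

Lemma scale_span c x y : scale_lat c (span2 x y) = span2 (c *: x) (c *: y).
Proof.
have e al be : c *: (al *: x + be *: y) = al *: (c *: x) + be *: (c *: y).
  by rewrite scalerDr !scalerA mulrC [c * be]mulrC.
apply: predE => w; split; first by move=> [w0 [[a [b [ha hb ->]]] ->]]; exists a, b.
by move=> [a [b [ha hb ->]]]; exists (a *: x + b *: y); split; [exists a, b|].
Qed.

Lemma homothetic_scale (L L' : V -> Prop) :
  homothetic L L' <-> exists2 c, c != 0 & L' = scale_lat c L.
Proof. by split=> [[c [c0 h]]|[c c0 ->]]; exists c => //; apply: predE. Qed.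

Lemma det2Z c x y : det2 (c *: x) (c *: y) = c ^+ 2 * det2 x y.
Proof. by rewrite /det2 !mxE expr2; ring. Qed.

Lemma lattice_scale c L : c != 0 -> is_lattice v L -> is_lattice v (scale_lat c L).
Proof.
move=> c0 /latticeP [x [y [hd ->]]]; apply/latticeP.
exists (c *: x), (c *: y); rewrite scale_span det2Z; split => //.
by rewrite mulf_neq0 // expf_neq0.
Qed.

Definition image (M : 'M[F]_2) (L : V -> Prop) : V -> Prop :=
  fun w => exists w0, L w0 /\ w = M *m w0.

Lemma image_lat M B : image M (lat B) = lat (M *m B).
Proof.
apply: predE => w; split; first by move=> [w0 [[c [hc ->]] ->]]; exists c; rewrite mulmxA.
by move=> [c [hc ->]]; exists (B *m c); split; [exists c|rewrite mulmxA].
Qed.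

Lemma lattice_image M L : M \in unitmx -> is_lattice v L -> is_lattice v (image M L).
Proof.
move=> hM /latticeB [B hB ->]; apply/latticeB.
by exists (M *m B); [rewrite unitmx_mul hM|rewrite image_lat].
Qed.

Lemma image_scale M c L : image M (scale_lat c L) = scale_lat c (image M L).
Proof.
apply: predE => w; split; move=> [w0 [[w1 [h ->]] ->]].
  by exists (M *m w1); split; [exists w1|rewrite scalemxAr].
by exists (c *: w1); split; [exists w1|rewrite scalemxAr].
Qed.

Lemma image_comp X Y L : image (X *m Y) L = image X (image Y L).
Proof.
apply: predE => w; split.
  by move=> [w0 [h ->]]; exists (Y *m w0); split; [exists w0|rewrite mulmxA].
by move=> [w0 [[w1 [h ->]] ->]]; exists w1; rewrite mulmxA.
Qed.

Lemma image1 L : image 1%:M L = L.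
Proof.
apply: predE => w; split; first by move=> [w0 [h ->]]; rewrite mul1mx.
by move=> h; exists w; rewrite mul1mx.
Qed.

Lemma image_span M x y : image M (span2 x y) = span2 (M *m x) (M *m y).
Proof.
have e al be : M *m (al *: x + be *: y) = al *: (M *m x) + be *: (M *m y).
  by rewrite mulmxDr -!scalemxAr.
apply: predE => w; split; first by move=> [w0 [[a [b [ha hb ->]]] ->]]; exists a, b.
by move=> [a [b [ha hb ->]]]; exists (a *: x + b *: y); split; [exists a, b|].
Qed.

Lemma strict_sub_image M (A B : V -> Prop) : M \in unitmx -> strict_sub A B ->
  strict_sub (image M A) (image M B).
Proof.
move=> hM [hs [w [hB hA]]]; split; first by move=> z [w0 [h ->]]; exists w0; split; auto.
exists (M *m w); split; first by exists w.
by move=> [w0 [h /(congr1 (mulmx (invmx M)))]]; rewrite !mulKmx // => e; apply: hA; rewrite e.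
Qed.

Lemma strict_sub_scale c (A B : V -> Prop) : c != 0 -> strict_sub A B ->
  strict_sub (scale_lat c A) (scale_lat c B).
Proof.
move=> c0 [hs [w [hB hA]]]; split; first by move=> z [w0 [h ->]]; exists w0; split; auto.
exists (c *: w); split; first by exists w.
move=> [w0 [h /(congr1 (fun z => c^-1 *: z))]] /=.
by rewrite !scalerA mulVf // !scale1r => e; apply: hA; rewrite e.
Qed.

Lemma homothetic_refl (L : V -> Prop) : homothetic L L.
Proof. by apply/homothetic_scale; exists 1; rewrite ?scale1 ?oner_neq0. Qed.

Lemma homothetic_sym (L L' : V -> Prop) : homothetic L L' -> homothetic L' L.
Proof.
move/homothetic_scale=> [c c0 ->]; apply/homothetic_scale.
by exists c^-1; rewrite ?invr_eq0 ?scaleK.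
Qed.

Lemma homothetic_trans (L1 L2 L3 : V -> Prop) :
  homothetic L1 L2 -> homothetic L2 L3 -> homothetic L1 L3.
Proof.
move/homothetic_scale=> [c c0 ->] /homothetic_scale [d d0 ->]; apply/homothetic_scale.
by exists (d * c); rewrite ?scaleM ?mulf_neq0.
Qed.

Local Notation vertex := (vertex v).

Definition vlat (x : vertex) := proj1_sig x.

Lemma vertexP (x y : vertex) : (forall L, vlat x L <-> vlat y L) -> x = y.
Proof.
case: x y => [P hP] [Q hQ] /= h.
have e : P = Q by apply: predE.
by subst Q; congr exist; apply: proof_irrelevance.
Qed.

Lemma vlat_exists (x : vertex) : exists L, vlat x L.
Proof. by case: x => P [L [hL h]] /=; exists L; apply/h; exact: homothetic_refl. Qed.

Lemma vlat_homothetic (x : vertex) L L' : vlat x L -> (vlat x L' <-> homothetic L L').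
Proof.
case: x => P [L0 [hL h]] /=; rewrite !h => h1; split.
  by apply: homothetic_trans; apply: homothetic_sym.
exact: homothetic_trans.
Qed.

Lemma vertex_eq (x y : vertex) L : vlat x L -> vlat y L -> x = y.
Proof.
by move=> hx hy; apply: vertexP => L'; rewrite (vlat_homothetic _ hx) (vlat_homothetic _ hy).
Qed.

Lemma vlat_scale (x : vertex) L c : vlat x L -> c != 0 -> vlat x (scale_lat c L).
Proof. by move=> h c0; apply/(vlat_homothetic _ h)/homothetic_scale; exists c. Qed.

Lemma vlat_lattice (x : vertex) L : vlat x L -> is_lattice v L.
Proof.
case: x => P [L0 [hL h]] /=; rewrite h => /homothetic_scale [c c0 ->].
exact: lattice_scale.
Qed.

Definition act_class (M : 'M[F]_2) (x : vertex) : (V -> Prop) -> Prop :=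
  fun L' => exists L, vlat x L /\ forall w, L' w <-> image M L w.

Lemma act_class_vertex M x : M \in unitmx -> is_vertex v (act_class M x).
Proof.
move=> hM; have [L0 h0] := vlat_exists x.
exists (image M L0); split; first by apply: lattice_image => //; exact: vlat_lattice h0.
move=> L'; split.
  move=> [L [hL /predE ->]]; move: hL; rewrite (vlat_homothetic _ h0).
  by move=> /homothetic_scale [c c0 ->]; apply/homothetic_scale; exists c; rewrite ?image_scale.
move=> /homothetic_scale [c c0 ->]; exists (scale_lat c L0).
by rewrite image_scale; split => //; exact: vlat_scale.
Qed.

(* [act M] is the action of [M] on vertices (the identity if [M] is singular). *)
Definition act (M : 'M[F]_2) (x : vertex) : vertex :=
  match Sumbool.sumbool_of_bool (M \in unitmx) with
  | left h => exist _ (act_class M x) (act_class_vertex x h)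
  | right _ => x
  end.

Lemma act_vlat M x L : M \in unitmx -> vlat x L -> vlat (act M x) (image M L).
Proof.
move=> hM hL; rewrite /act; case: Sumbool.sumbool_of_bool => h; last by rewrite hM in h.
by exists L.
Qed.

Lemma actM X Y x : X \in unitmx -> Y \in unitmx -> act (X *m Y) x = act X (act Y x).
Proof.
move=> hX hY; have [L hL] := vlat_exists x.
apply: (@vertex_eq _ _ (image (X *m Y) L)); first by apply: act_vlat; rewrite ?unitmx_mul ?hX.
by rewrite image_comp; do 2 apply: act_vlat => //.
Qed.

Lemma act1 x : act 1%:M x = x.
Proof.
have [L hL] := vlat_exists x.
by apply: (@vertex_eq _ _ L) => //; have := act_vlat (unitmx1 _ _) hL; rewrite image1.
Qed.

Lemma actK M x : M \in unitmx -> act (invmx M) (act M x) = x.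
Proof. by move=> hM; rewrite -actM ?unitmx_inv // mulVmx // act1. Qed.

Lemma actKV M x : M \in unitmx -> act M (act (invmx M) x) = x.
Proof. by move=> hM; rewrite -actM ?unitmx_inv // mulmxV // act1. Qed.

Lemma act_adj M x y : M \in unitmx -> adj p x y -> adj p (act M x) (act M y).
Proof.
move=> hM [L [L' [hx [hy [s1 s2]]]]].
exists (image M L), (image M L'); do 2 (split; first exact: act_vlat).
by split; [rewrite -image_scale|]; apply: strict_sub_image.
Qed.

Lemma act_walk M x y n : M \in unitmx -> walk p x y n <-> walk p (act M x) (act M y) n.
Proof.
have fwd N x' y' : N \in unitmx -> walk p x' y' n -> walk p (act N x') (act N y') n.
  move=> hN; elim: n x' => [|n IH] x' /=; first by move=> ->.
  by move=> [z [hz hw]]; exists (act N z); split; [exact: act_adj|exact: IH].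
move=> hM; split; first exact: fwd.
have hMi : invmx M \in unitmx by rewrite unitmx_inv.
by move/(fwd _ _ _ hMi); rewrite !actK.
Qed.

Lemma act_aut M : M \in unitmx -> is_aut p (act M).
Proof.
move=> hM; split.
  by exists (act (invmx M)) => x; [exact: actK|exact: actKV].
move=> x y n; split=> -[h1 h2]; split.
- exact: (act_walk _ _ _ hM).1.
- by move=> m hm /(act_walk x y m hM); apply: h2 hm.
- exact: (act_walk _ _ _ hM).2.
- by move=> m hm /(act_walk x y m hM); apply: h2 hm.
Qed.

Lemma act_Ghat M e : M \in unitmx -> in_Ghat p e (act M).
Proof.
move=> hM; split; first exact: act_aut.
move=> x1 x2 _; exists M; split => // y _ L'; split.
  by rewrite /act; case: Sumbool.sumbool_of_bool => h //; rewrite hM in h.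
by move=> [L [hL /predE ->]]; exact: act_vlat.
Qed.

Lemma act_ray M r : M \in unitmx -> ray p r -> ray p (act M \o r).
Proof.
move=> hM [hi ha]; split=> [i j /= /(congr1 (act (invmx M)))|i]; last exact: act_adj.
by rewrite !actK // => /hi.
Qed.

(* For primitive [a] their classes are the
   vertices at distance [n] from the standard vertex [[o^2]] on the way to the
   end determined by the line [F a]; every vertex has this form. *)

Definition towards (a : V) (n : nat) : V -> Prop :=
  fun z => exists al y, [/\ in_o v al, integral y & z = al *: a + p ^+ n *: y].

Lemma towards_span a f n : integral a -> integral f -> unit_o (det2 a f) ->
  towards a n = span2 a (p ^+ n *: f).
Proof.
move=> ha hf hd; apply: predE => z; split.
  move=> [al [y [hal hy ->]]].
  move: hy; rewrite -(span2_basis ha hf hd) => -[b0 [b1 [h0 h1 ->]]].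
  exists (al + p ^+ n * b0), b1; split => //.
    by apply: in_oD => //; apply: in_oM => //; exact: in_o_pX.
  by apply: vec2P; rewrite !mxE; ring.
move=> [al [be [hal hbe ->]]]; exists al, (be *: f).
by rewrite !scalerA mulrC; split => //; apply: integralZ.
Qed.

Lemma towards_congr a a' n : divpv n (a' - a) -> towards a' n = towards a n.
Proof.
have sub b b' : divpv n (b' - b) -> forall z, towards b' n z -> towards b n z.
  move=> /divpvP [y0 hy0 e] z [al [y [hal hy ->]]].
  exists al, (al *: y0 + y); split => //; first by apply: integralD => //; apply: integralZ.
  have -> : b' = b + p ^+ n *: y0 by rewrite -e addrC subrK.
  by apply: vec2P; rewrite !mxE; ring.
move=> h; apply: predE => z; split; first exact: sub.
by apply: sub; rewrite -opprB; apply: divpvN.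
Qed.

Lemma towards0 a : primitive a -> towards a 0 = integral.
Proof.
move=> ha; have [f hf hd] := primitive_completion ha.
by rewrite (towards_span 0 ha.1 hf hd) expr0 scale1r (span2_basis ha.1 hf hd).
Qed.

Lemma towards_transitive a1 a2 : primitive a1 -> primitive a2 ->
  exists2 N : 'M[F]_2, N \in unitmx & forall n, image N (towards a1 n) = towards a2 n.
Proof.
move=> ha1 ha2.
have [f1 hf1 hd1] := primitive_completion ha1.
have [f2 hf2 hd2] := primitive_completion ha2.
have hM1 : mat2 a1 f1 \in unitmx by rewrite unitmx_mat2 unit_o_neq0.
pose N := mat2 a2 f2 *m invmx (mat2 a1 f1).
have Ncol x (e : V) : mat2 a1 f1 *m e = x -> N *m x = mat2 a2 f2 *m e.
  by move=> <-; rewrite /N -mulmxA mulKmx.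
exists N; first by rewrite unitmx_mul unitmx_mat2 unit_o_neq0 // unitmx_inv.
move=> n; rewrite (towards_span n ha1.1 hf1 hd1) (towards_span n ha2.1 hf2 hd2).
by rewrite image_span -scalemxAr (Ncol _ _ (mat2_e1 _ _)) (Ncol _ _ (mat2_e2 _ _)) mat2_e1 mat2_e2.
Qed.

(* An integral lattice containing a primitive vector [w] is [towards w n],
   where [p^n f] generates its intersection with the line [F f] of a
   complement [f] of [w]; [n] is found as a least valuation. *)
Lemma towards_of_sublattice x y w : det2 x y != 0 -> (forall z, span2 x y z -> integral z) ->
  span2 x y w -> primitive w -> exists n, span2 x y = towards w n.
Proof.
move=> hd hint hw hpw; have [f hf hdf] := primitive_completion hpw.
pose P n := exists2 be, be != 0 /\ v be = n%:Z & span2 x y (be *: f).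
have [n0 [[be0 [be00 vbe0] hbe0] n0min]] : exists n, P n /\ forall k, P k -> (n <= k)%N.
  apply: ex_least; have [k0 hk0] := scale_into_o (det2 f y / det2 x y).
  have [k1 hk1] := scale_into_o (det2 x f / det2 x y).
  exists (k0 + k1)%N, (p ^+ (k0 + k1)); first by rewrite pX_neq0 v_pX.
  rewrite (cramer f hd) scalerDr !scalerA exprD.
  apply: span2_comb; [| |exact: span2_x|exact: span2_y].
  - by rewrite mulrAC; apply: in_oM hk0 (in_o_pX _).
  - by rewrite -mulrA; apply: in_oM (in_o_pX _) hk1.
exists n0; rewrite (towards_span n0 hpw.1 hf hdf); apply: predE => z; split.
  move=> hz; move: (hint z hz); rewrite -(span2_basis hpw.1 hf hdf) => -[al [be [hal hbe ez]]].
  have hbL : span2 x y (be *: f).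
    have -> : be *: f = 1 *: z + (- al) *: w by rewrite ez scale1r scaleNr addrAC subrr add0r.
    by apply: span2_comb => //; [exact: in_o1|exact: in_oN].
  have [be0'|bn0] := eqVneq be 0.
    by exists al, 0; rewrite ez be0' !scale0r; split => //; exact: in_o0.
  have vbe : n0%:Z <= v be.
    case: hbe => [/eqP|hv]; first by rewrite (negPf bn0).
    have e : v be = (absz (v be))%:Z by lia.
    by have := n0min _ (ex_intro2 _ _ be (conj bn0 e) hbL); lia.
  have /divpP [be' hbe' eb] : divp n0 be by right.
  by exists al, be'; split => //; rewrite ez eb scalerA [be' * _]mulrC.
move=> [al [be [hal hbe ->]]]; apply: span2_comb => //.
have -> : p ^+ n0 *: f = (p ^+ n0 / be0) *: (be0 *: f) by rewrite scalerA divfK.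
apply: span2Z hbe0; apply: unit_o_in_o; apply: unit_o_div; rewrite ?pX_neq0 //.
by rewrite v_pX vbe0.
Qed.

(* Scaling a lattice by an entry of least valuation of a basis makes it
   integral and puts a primitive vector into it. *)
Lemma normal_form L : is_lattice v L ->
  exists a n c, [/\ primitive a, c != 0 & L = scale_lat c (towards a n)].
Proof.
move=> /latticeP [b0 [b1 [hd ->]]].
pose s := [:: b0 0 0; b0 1 0; b1 0 0; b1 1 0].
have hs : has (fun x => x != 0) s.
  apply: contraTT hd; rewrite /det2 /= orbF !negb_or !negbK.
  by move=> /and4P [/eqP -> /eqP -> /eqP -> /eqP ->]; rewrite !mulr0 subrr eqxx.
have [m ms [m0 mmin]] := seq_argmin v hs.
have hint y : y \in s -> in_o v (m^-1 * y).
  move=> ys; have [->|y0] := eqVneq y 0; first by rewrite mulr0; exact: in_o0.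
  by right; rewrite v_mul ?invr_eq0 // vV //; have := mmin y ys y0; lia.
have hb0 : integral (m^-1 *: b0) by split; rewrite mxE; apply: hint; rewrite !inE eqxx ?orbT.
have hb1 : integral (m^-1 *: b1) by split; rewrite mxE; apply: hint; rewrite !inE eqxx ?orbT.
have hd' : det2 (m^-1 *: b0) (m^-1 *: b1) != 0 by rewrite det2Z mulf_neq0 ?expf_neq0 ?invr_eq0.
have u1 : unit_o (m^-1 * m) by rewrite mulVf //; split; [exact: oner_neq0|exact: v1].
have [w hw hpw] : exists2 w, span2 (m^-1 *: b0) (m^-1 *: b1) w & primitive w.
  move: ms; rewrite !inE => /or4P [] /eqP em.
  - by exists (m^-1 *: b0); [exact: span2_x|split => //; left; rewrite mxE -em].
  - by exists (m^-1 *: b0); [exact: span2_x|split => //; right; rewrite mxE -em].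
  - by exists (m^-1 *: b1); [exact: span2_y|split => //; left; rewrite mxE -em].
  - by exists (m^-1 *: b1); [exact: span2_y|split => //; right; rewrite mxE -em].
have [n en] := towards_of_sublattice hd' (fun z => integral_span hb0 hb1) hw hpw.
by exists w, n, m; rewrite -en -scale_span scaleM mulfV // scale1.
Qed.

(* A lattice of a neighbouring vertex sits between [p R] and [R];
   [index_p_sublattice] below pins it down from any of its vectors outside
   [p R]. *)

Definition omodule (L : V -> Prop) :=
  forall c d z1 z2, in_o v c -> in_o v d -> L z1 -> L z2 -> L (c *: z1 + d *: z2).

Lemma lattice_omodule L : is_lattice v L -> omodule L.
Proof. by move=> /latticeP [x [y [_ ->]]] c d z1 z2; apply: span2_comb. Qed.

Lemma span2_eq x y x' y' : span2 x' y' x -> span2 x' y' y ->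
  span2 x y x' -> span2 x y y' -> span2 x y = span2 x' y'.
Proof.
move=> hx hy hx' hy'; apply: predE => z; split=> -[a [b [ha hb ->]]]; exact: span2_comb.
Qed.

Lemma span2C x y : span2 x y = span2 y x.
Proof. by apply: span2_eq; [exact: span2_y|exact: span2_x|exact: span2_y|exact: span2_x]. Qed.

Lemma span2_shear x y c : in_o v c -> span2 (x + c *: y) y = span2 x y.
Proof.
move=> hc; have h1 := in_o1.
apply: span2_eq; [|exact: span2_y| |exact: span2_y].
  have -> : x + c *: y = 1 *: x + c *: y by rewrite scale1r.
  by apply: span2_comb => //; [exact: span2_x|exact: span2_y].
rewrite [X in span2 _ _ X](_ : x = 1 *: (x + c *: y) + (- c) *: y); last first.
  by rewrite scale1r scaleNr addrK.
by apply: span2_comb => //; [exact: in_oN|exact: span2_x|exact: span2_y].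
Qed.

Lemma span2_unit x y u : unit_o u -> span2 (u *: x) y = span2 x y.
Proof.
move=> hu; apply: span2_eq; [|exact: span2_y| |exact: span2_y].
  by apply: span2Z (span2_x _ _); apply: unit_o_in_o.
rewrite [X in span2 _ _ X](_ : x = u^-1 *: (u *: x)); last first.
  by rewrite scalerA mulVf ?scale1r // unit_o_neq0.
by apply: span2Z (span2_x _ _); apply: in_oV.
Qed.

Lemma index_p_sublattice (L : V -> Prop) b1 b2 w al be :
  omodule L -> (forall z, span2 b1 b2 z -> L (p *: z)) ->
  (forall z, L z -> span2 b1 b2 z) -> ~ (L b1 /\ L b2) ->
  L w -> w = al *: b1 + be *: b2 -> unit_o al -> in_o v be -> L = span2 w (p *: b2).
Proof.
move=> hL hpR hLR hnot hw ew ual hbe; have al0 := unit_o_neq0 ual.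
have hb2 : L (p *: b2) by apply: hpR; exact: span2_y.
apply: predE => z; split; last by move=> [c [d [hc hd ->]]]; exact: hL.
move=> hz; have [g [d [hg hd ez]]] := hLR z hz.
pose q := g / al; pose eps := d - q * be.
have hq : in_o v q by apply: in_o_div.
have heps : in_o v eps by apply: in_oB => //; apply: in_oM.
have ez' : z = q *: w + eps *: b2.
  by rewrite ez ew /eps /q; apply: vec2P; rewrite !mxE; field.
case: (unit_or_divp1 heps) => [ueps|/divp1P [e' he' ee]].
  exfalso; apply: hnot.
  have Lb2 : L b2.
    have -> : b2 = eps^-1 *: z + (- (eps^-1 * q)) *: w.
      by rewrite ez' scalerDr !scalerA mulVf ?scale1r ?unit_o_neq0 // scaleNr addrAC subrr add0r.
    by apply: hL => //; [exact: in_oV|apply: in_oN; apply: in_oM => //; exact: in_oV].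
  split => //; have -> : b1 = al^-1 *: w + (- (be / al)) *: b2.
    by rewrite ew; apply: vec2P; rewrite !mxE; field.
  by apply: hL => //; [exact: in_oV|apply: in_oN; apply: in_o_div].
by exists q, e'; split => //; rewrite ez' ee scalerA mulrC.
Qed.

(* Throughout, [(a, f)] is a
   basis of [o^2], so that [R := towards a n = o a + o p^n f], and [L] is an
   o-module with [p R <= L <= R] not containing both [a] and [p^n f], i.e.
   [L <> R]. *)
Section Neighbours.
Variables (a f : V) (n : nat) (L : V -> Prop).
Hypotheses (ha : integral a) (hf : integral f) (hd : unit_o (det2 a f)).
Hypothesis hL : omodule L.
Hypothesis hpR : forall z, span2 a (p ^+ n *: f) z -> L (p *: z).
Hypothesis hLR : forall z, L z -> span2 a (p ^+ n *: f) z.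
Hypothesis hnot : ~ (L a /\ L (p ^+ n *: f)).

Lemma neighbour_outward w al be : L w -> w = al *: a + be *: (p ^+ n *: f) ->
  unit_o al -> in_o v be ->
  exists w', [/\ primitive w', divpv n (w' - a) & L = towards w' n.+1].
Proof.
move=> hw ew ual hbe; have eL := index_p_sublattice hL hpR hLR hnot hw ew ual hbe.
pose t := be / al; pose w' := a + t *: (p ^+ n *: f).
have ht : in_o v t by apply: in_o_div.
have dw' : det2 w' f = det2 a f by rewrite /w' /det2 !mxE; ring.
have hw' : integral w' by apply: integralD ha (integralZ ht (integralZ (in_o_pX n) hf)).
exists w'; split.
- by apply: primitive_det hw' hf _; rewrite dw'.
- rewrite /w' addrAC subrr add0r scalerA; apply/divpvP.
  by exists (t *: f); [exact: integralZ|rewrite scalerA mulrC].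
- rewrite eL (towards_span n.+1 hw' hf) ?dw' // exprS -scalerA.
  have -> : w = al *: w'.
    by rewrite ew /w' /t; apply: vec2P; rewrite !mxE; field; apply: unit_o_neq0.
  exact: span2_unit.
Qed.

Lemma neighbour_back_span w al be : L w -> w = al *: a + be *: (p ^+ n *: f) ->
  in_o v al -> unit_o be -> L = span2 w (p *: a).
Proof.
move=> hw ew hal ube.
have hpR' z : span2 (p ^+ n *: f) a z -> L (p *: z) by rewrite span2C; exact: hpR.
have hLR' z : L z -> span2 (p ^+ n *: f) a z by rewrite span2C; exact: hLR.
have hnot' : ~ (L (p ^+ n *: f) /\ L a) by case=> ? ?; apply: hnot.
by apply: index_p_sublattice hL hpR' hLR' hnot' hw _ ube hal; rewrite ew addrC.
Qed.

Lemma neighbour_inward w al be : (0 < n)%N -> L w -> w = al *: a + be *: (p ^+ n *: f) ->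
  divp 1 al -> unit_o be -> L = scale_lat p (towards a n.-1).
Proof.
move=> npos hw ew dal ube; rewrite (neighbour_back_span hw ew (divp_in_o dal) ube).
move: dal => /divp1P [al' hal' eal].
rewrite ew eal addrC [p * al']mulrC -scalerA span2_shear // span2_unit //.
by rewrite (towards_span n.-1 ha hf hd) scale_span span2C scalerA -exprS prednK.
Qed.

Lemma neighbour_base w al be : n = 0%N -> L w -> w = al *: a + be *: (p ^+ n *: f) ->
  in_o v al -> unit_o be ->
  exists w', [/\ primitive w', divpv n (w' - a) & L = towards w' n.+1].
Proof.
move=> n0 hw ew hal ube; have eL := neighbour_back_span hw ew hal ube.
have hwi : integral w.
  by apply: integral_span (hLR hw); rewrite // n0 expr0 scale1r.
have dw : unit_o (det2 w a).
  have -> : det2 w a = - (be * det2 a f) by rewrite ew n0 expr0 scale1r /det2 !mxE; ring.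
  by apply: unit_oN; apply: unit_oM.
exists w; split; first exact: primitive_det hwi ha dw.
  by rewrite n0; apply: divpvD hwi (divpvN ha).
by rewrite eL (towards_span n.+1 hwi ha dw) n0 expr1.
Qed.

End Neighbours.

Lemma towards_neighbours a n L : primitive a -> is_lattice v L ->
  strict_sub (scale_lat p (towards a n)) L -> strict_sub L (towards a n) ->
  (exists w, [/\ primitive w, divpv n (w - a) & L = towards w n.+1]) \/
  ((0 < n)%N /\ L = scale_lat p (towards a n.-1)).
Proof.
move=> hpa /lattice_omodule hL [spL [w [hwL hwpR]]] [sL [w1 [hw1R hw1L]]].
have [f hf hd] := primitive_completion hpa.
rewrite (towards_span n hpa.1 hf hd) in spL hwpR sL hw1R.
have hpR z : span2 a (p ^+ n *: f) z -> L (p *: z) by move=> hz; apply: spL; exists z.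
have hnot : ~ (L a /\ L (p ^+ n *: f)).
  by case=> h1 h2; apply: hw1L; case: hw1R => [c [d [hc hd' ->]]]; exact: hL.
have [al [be [hal hbe ew]]] := sL w hwL.
case: (unit_or_divp1 hal) => [ual|dal].
  by left; apply: (neighbour_outward hpa.1 hf hd hL hpR sL hnot hwL ew ual hbe).
have ube : unit_o be.
  case: (unit_or_divp1 hbe) => // /divp1P [be' hbe' ebe]; exfalso; apply: hwpR.
  move: dal => /divp1P [al' hal' eal]; exists (al' *: a + be' *: (p ^+ n *: f)).
  split; first by apply: span2_comb => //; [exact: span2_x|exact: span2_y].
  by rewrite ew eal ebe scalerDr !scalerA.
have [n0|npos] := posnP n.
  by left; apply: (neighbour_base hpa.1 hf hd hL hpR sL hnot n0 hwL ew hal ube).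
by right; split => //; apply: (neighbour_inward hpa.1 hf hd hL hpR sL hnot npos hwL ew dal ube).
Qed.

Definition represents (a : V) (n : nat) (x : vertex) :=
  primitive a /\ vlat x (towards a n).

Lemma represents_exists x : exists a n, represents a n x.
Proof.
have [L hL] := vlat_exists x.
have [a [n [c [ha c0 eL]]]] := normal_form (vlat_lattice hL).
exists a, n; split => //; rewrite -(scaleK (towards a n) c0) -eL.
by apply: vlat_scale => //; rewrite invr_eq0.
Qed.

Lemma represents_adj a n x y : represents a n x -> adj p x y ->
  (exists w, [/\ primitive w, divpv n (w - a) & represents w n.+1 y]) \/
  ((0 < n)%N /\ represents a n.-1 y).
Proof.
move=> [ha hx] [L [L' [hL [hL' [s1 s2]]]]].
have /homothetic_scale [c c0 eL] := (vlat_homothetic L hx).1 hL.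
have ci0 : c^-1 != 0 by rewrite invr_eq0.
have hy : vlat y (scale_lat c^-1 L') by apply: vlat_scale.
have s1' : strict_sub (scale_lat p (towards a n)) (scale_lat c^-1 L').
  have := strict_sub_scale ci0 s1; rewrite eL !scaleM.
  by rewrite [c^-1 * p]mulrC -mulrA mulVf // mulr1.
have s2' : strict_sub (scale_lat c^-1 L') (towards a n).
  by have := strict_sub_scale ci0 s2; rewrite eL scaleK.
case: (towards_neighbours ha (vlat_lattice hy) s1' s2') => [[w [hw hd e]]|[hn e]].
  by left; exists w; split => //; split => //; rewrite -e.
right; split => //; split => //; rewrite -(scaleK (towards a n.-1) p_neq0) -e.
by apply: vlat_scale => //; rewrite invr_eq0.
Qed.

(* Normal forms along a path.  Along a path [r] we choose representations
   [(a_i, n_i)] of the vertices [r i] step by step, preferring an outward step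
   [n_(i+1) = n_i + 1] whenever one is possible. *)

Definition outward (s s' : V * nat) :=
  [/\ primitive s'.1, divpv s.2 (s'.1 - s.1) & s'.2 = s.2.+1].

Definition inward (s s' : V * nat) := (0 < s.2)%N /\ s' = (s.1, s.2.-1).

Definition next_rep (r : nat -> vertex) (i : nat) (s s' : V * nat) :=
  represents s'.1 s'.2 (r i.+1) /\
  (outward s s' \/
   (inward s s' /\ ~ exists s'', represents s''.1 s''.2 (r i.+1) /\ outward s s'')).

Lemma next_rep_exists r i s : adj p (r i) (r i.+1) -> represents s.1 s.2 (r i) ->
  exists s', next_rep r i s s'.
Proof.
move=> hadj hs.
case: (classic (exists s'', represents s''.1 s''.2 (r i.+1) /\ outward s s''))
  => [[s'' [h1 h2]]|hno]; first by exists s''; split => //; left.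
case: (represents_adj hs hadj) => [[w [hw hd hr]]|[hn hr]].
  by exfalso; apply: hno; exists (w, s.2.+1).
by exists (s.1, s.2.-1); split => //; right.
Qed.

Definition rep_inhabited : inhabited (V * nat) := inhabits (0, 0%N).

Fixpoint rep_seq (r : nat -> vertex) (i : nat) : V * nat :=
  match i with
  | 0 => epsilon rep_inhabited (fun s => represents s.1 s.2 (r 0))
  | i'.+1 => epsilon rep_inhabited (next_rep r i' (rep_seq r i'))
  end.

Lemma rep_seq_spec r : (forall i, adj p (r i) (r i.+1)) -> forall i,
  represents (rep_seq r i).1 (rep_seq r i).2 (r i) /\
  next_rep r i (rep_seq r i) (rep_seq r i.+1).
Proof.
move=> hadj; suff hrep i : represents (rep_seq r i).1 (rep_seq r i).2 (r i).
  by move=> i; split => //; apply: epsilon_spec; apply: next_rep_exists.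
elim: i => [|i IH] /=.
  apply: (epsilon_spec rep_inhabited (fun s => represents s.1 s.2 (r 0))).
  by have [a [n h]] := represents_exists (r 0); exists (a, n).
by have [] := epsilon_spec rep_inhabited _ (next_rep_exists (hadj i) IH).
Qed.

(* On a ray (a path without repetition) an outward step is never followed by
   an inward one, since that would return to the previous vertex ... *)
Lemma outward_persists r i : ray p r ->
  outward (rep_seq r i) (rep_seq r i.+1) -> outward (rep_seq r i.+1) (rep_seq r i.+2).
Proof.
move=> [rinj hadj] [_ hcong hn]; have [[_ hri] _] := rep_seq_spec hadj i.
have [_ [[_ hri2] [//|[[_ e] _]]]] := rep_seq_spec hadj i.+1.
exfalso; move: hri2; rewrite e /= hn /= (towards_congr hcong) => hri2.
by have /rinj/eqP := vertex_eq hri2 hri; rewrite -addn2 -{2}[i]addn0 eqn_add2l.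
Qed.

(* ... and the representations cannot step inwards forever, so from some
   index on every step is outward. *)
Lemma eventually_outward r : ray p r ->
  exists i0, forall k, outward (rep_seq r (i0 + k)) (rep_seq r (i0 + k).+1).
Proof.
move=> hr; have hadj := hr.2.
have [i0 hi0] : exists i0, outward (rep_seq r i0) (rep_seq r i0.+1).
  apply: NNPP => hno.
  have inw i : (0 < (rep_seq r i).2)%N /\ (rep_seq r i.+1).2 = (rep_seq r i).2.-1.
    have [_ [_ [ho|[[hpos ->] _]]]] := rep_seq_spec hadj i; last by [].
    by exfalso; apply: hno; exists i.
  have hN i : (rep_seq r i).2 = ((rep_seq r 0).2 - i)%N.
    by elim: i => [|i IH]; rewrite ?subn0 // (inw i).2 IH subnS.
  by have := (inw (rep_seq r 0).2).1; rewrite hN subnn.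
exists i0; elim => [|k IH]; first by rewrite addn0.
by rewrite addnS; apply: outward_persists.
Qed.

Lemma ray_tail r : ray p r -> exists (a : nat -> V) i0 N0, forall k,
  [/\ primitive (a k), vlat (r (i0 + k)) (towards (a k) (N0 + k))
    & divpv (N0 + k) (a k.+1 - a k)].
Proof.
move=> hr; have [i0 hout] := eventually_outward hr.
have hrep i := (rep_seq_spec hr.2 i).1.
pose N0 := (rep_seq r i0).2.
have hN k : (rep_seq r (i0 + k)).2 = (N0 + k)%N.
  elim: k => [|k IH]; first by rewrite !addn0.
  by rewrite addnS; have [_ _ ->] := hout k; rewrite IH addnS.
exists (fun k => (rep_seq r (i0 + k)).1), i0, N0 => k.
have [prim_k rep_k] := hrep (i0 + k)%N; have [_ cong_k _] := hout k.
by rewrite -hN addnS.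
Qed.

Section Ends.
Hypothesis v_complete : complete_valuation v.

Lemma complete_limit (c : nat -> F) (N0 : nat) :
  (forall k, divp (N0 + k) (c k.+1 - c k)) -> exists l, forall k, divp (N0 + k) (l - c k).
Proof.
move=> hc.
have cauchy k l : divp (N0 + k) (c (k + l)%N - c k).
  elim: l => [|l IH]; first by rewrite addn0 subrr; exact: divp0.
  rewrite addnS -(subrK (c (k + l)%N) (c _)) -addrA; apply: divpD => //.
  by apply: divp_le (hc _); rewrite leq_add2l leq_addr.
have [l hl] : exists l : F, forall N : nat, exists M : nat, forall n, (M <= n)%N ->
    c n - l = 0 \/ (N%:Z <= v (c n - l)).
  apply: v_complete => N; exists N => m n hm hn.
  have -> : c m - c n = (c (N + (m - N))%N - c N) - (c (N + (n - N))%N - c N).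
    by rewrite !subnKC //; ring.
  by apply: (@divp_le N (N0 + N)); [exact: leq_addl|apply: divpB].
exists l => k; have [M hM] := hl (N0 + k)%N.
have -> : l - c k = (c (k + (maxn M k - k))%N - c k) - (c (maxn M k) - l).
  by rewrite subnKC ?leq_maxr //; ring.
by apply: divpB; [exact: cauchy|apply: hM; rewrite leq_maxl].
Qed.

Lemma vec_limit (a : nat -> V) (N0 : nat) :
  (forall k, divpv (N0 + k) (a k.+1 - a k)) -> exists u, forall k, divpv (N0 + k) (u - a k).
Proof.
move=> ha.
have [l0 hl0] : exists l, forall k, divp (N0 + k) (l - a k 0 0).
  by apply: complete_limit => k; have [] := ha k; rewrite !mxE.
have [l1 hl1] : exists l, forall k, divp (N0 + k) (l - a k 1 0).
  by apply: complete_limit => k; have [] := ha k; rewrite !mxE.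
by exists (mkv l0 l1) => k; split; rewrite !mxE /=.
Qed.

(* The end of a ray: its tail is [[towards u (N0 + k)]]; [u] is primitive as
   it is congruent to the primitive [a_1] modulo [p]. *)
Lemma ray_end r : ray p r ->
  exists u i0 N0, primitive u /\ forall k, vlat (r (i0 + k)) (towards u (N0 + k)).
Proof.
move=> hr; have [a [i0 [N0 ha]]] := ray_tail hr.
have [u hu] := vec_limit (fun k => let: And3 _ _ h := ha k in h).
exists u, i0, N0; split => [|k]; last by rewrite (towards_congr (hu k)); case: (ha k).
apply: (@primitive_mod (a 1%N)); first by case: (ha 1%N).
by apply: divpv_le (hu 1%N); rewrite leq_addl.
Qed.

Lemma standard_stabiliser_transitive r1 r2 : ray p r1 -> ray p r2 ->
  exists2 N, N \in unitmx & image N integral = integral /\ equiv_rays (act N \o r1) r2.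
Proof.
move=> h1 h2.
have [u1 [i1 [N1 [hu1 e1]]]] := ray_end h1.
have [u2 [i2 [N2 [hu2 e2]]]] := ray_end h2.
have [N hN eN] := towards_transitive hu1 hu2.
exists N => //; split; first by have := eN 0%N; rewrite (towards0 hu1) (towards0 hu2).
exists (i1 + N2)%N, (i2 + N1)%N => i /=.
apply: (@vertex_eq _ _ (towards u2 (N1 + (N2 + i)))).
  by rewrite -eN; apply: act_vlat => //; rewrite -addnA; exact: e1.
by rewrite (addnCA N1 N2 i) -addnA; exact: e2.
Qed.

(* Conjugating by a matrix carrying [[o^2]] to [x0] gives the theorem. *)
Lemma stabiliser_transitive e x0 r1 r2 : ray p r1 -> ray p r2 ->
  exists g : vertex -> vertex, [/\ in_Ghat p e g, g x0 = x0 & equiv_rays (g \o r1) r2].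
Proof.
move=> h1 h2; have [L0 hL0] := vlat_exists x0.
have [B hB eL0] := (latticeB L0).1 (vlat_lattice hL0).
have hA : invmx B \in unitmx by rewrite unitmx_inv.
have [N hN [fixN [a [b eqN]]]] := standard_stabiliser_transitive (act_ray hA h1) (act_ray hA h2).
have hM : B *m N *m invmx B \in unitmx by rewrite !unitmx_mul hB hN.
have gE x : act (B *m N *m invmx B) x = act B (act N (act (invmx B) x)).
  by rewrite !actM // unitmx_mul hB.
exists (act (B *m N *m invmx B)); split.
- exact: act_Ghat.
- apply: (@vertex_eq _ _ L0) => //.
  suff -> : L0 = image (B *m N *m invmx B) L0 by exact: act_vlat.
  have eB : lat B = image B integral by rewrite -lat1 image_lat mulmx1.
  by rewrite eL0 eB -!image_comp -!mulmxA mulVmx // mulmx1 image_comp fixN.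
- exists a, b => i /=; rewrite gE.
  by have := eqN i => /= ->; rewrite actKV.
Qed.

End Ends.
End BruhatTitsTree.

Theorem mainTheorem8 (F : fieldType) (v : F -> int) (p : F)
  (hF : is_nonarch_local_field v) (hp0 : p != 0) (hp : v p = 1)
  (e : nat) (he : (1 <= e)%N) (x0 : vertex v)
  (r1 r2 : nat -> vertex v) (h1 : ray p r1) (h2 : ray p r2) :
  exists g : vertex v -> vertex v,
    [/\ in_Ghat p e g, g x0 = x0 & equiv_rays (g \o r1) r2].
Proof.
case: hF => [[v_mul v_add _] _ v_complete].
exact: (stabiliser_transitive v_mul v_add hp0 hp v_complete e x0 h1 h2).
Qed.
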